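(* Let $d\ge0$ be an integer. There exist an instance domain $\mathcal{X}$ and a hypothesis class $\mathcal{H}$ with Littlestone dimension $d$ such that the following holds for all integers $k,l\ge0$: if $k<l+d$, then for any $a\ge 0$ there exists a strategy of the adversary, all of whose presented sequences satisfy the $l$-bias assumption with respect to $\mathcal{H}$, such that any algorithm guaranteeing a cumulative mistake penalty of at most $k$ in the randomized prediction model must have cumulative abstention penalty at least $a$.
   Context: Randomized prediction model: at round $t$ the adversary presents $x_t\in\mathcal{X}$; the learner outputs $(p_{t,-},p_{t,+},1-p_{t,-}-p_{t,+})$ with $p_{t,-},p_{t,+}\ge0$, $p_{t,-}+p_{t,+}\le 1$ (probabilities of predicting $-1$, $+1$, abstaining); the adversary reveals $y_t\in\{-1,+1\}$. After $n$ rounds the cumulative mistake penalty is $\sum_{t=1}^n \big(I(y_t=-1)p_{t,+}+I(y_t=+1)p_{t,-}\big)$ and the cumulative abstention penalty is $\sum_{t=1}^n(1-p_{t,+}-p_{t,-})$. Hypotheses are maps $\mathcal{X}\to\{-1,+1\}$. $\mathcal{C}^l$ is the class of functions $x\mapsto 1-2I(x\in D)$ for $D\subseteq\mathcal{X}$, $|D|\le l$, and $\mathcal{H}^l=\{x\mapsto h(x)c(x): h\in\mathcal{H},c\in\mathcal{C}^l\}$. A sequence $(x_1,y_1),\dots,(x_n,y_n)$ satisfies the $l$-bias assumption w.r.t. $\mathcal{H}$ if some $h\in\mathcal{H}^l$ has $h(x_t)=y_t$ for all $t$. The Littlestone dimension of $\mathcal{H}$ is the largest $d$ such that there is a complete binary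 tree of depth $d$ with internal nodes labeled by points of $\mathcal{X}$ such that for every root-to-leaf path (left = label $-1$, right = label $+1$) some $h\in\mathcal{H}$ agrees with all labels on the path. *)

From Stdlib Require Import Reals List.
Import ListNotations.
Open Scope R_scope.

(* Labels {-1,+1}. *)
Inductive sign : Type := Neg | Pos.

Definition flip (s : sign) : sign := match s with Neg => Pos | Pos => Neg end.

Inductive ltree (X : Type) : Type :=
| Leaf : ltree X
| Node : X -> ltree X -> ltree X -> ltree X.
Arguments Leaf {X}.
Arguments Node {X} _ _ _.

Fixpoint complete_of_depth {X : Type} (t : ltree X) (d : nat) : Prop :=
  match t, d with
  | Leaf, O => True
  | Node _ l r, S d' => complete_of_depth l d' /\ complete_of_depth r d'
  | _, _ => False
  end.

(* Every root-to-leaf path (left = label -1, right = label +1) is realized by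
   some hypothesis satisfying P (P accumulates the labels of the path so far). *)
Fixpoint paths_realized {X : Type} (P : (X -> sign) -> Prop) (t : ltree X) : Prop :=
  match t with
  | Leaf => exists h, P h
  | Node x l r =>
      paths_realized (fun h => P h /\ h x = Neg) l /\
      paths_realized (fun h => P h /\ h x = Pos) r
  end.

Definition shatters {X : Type} (H : (X -> sign) -> Prop) (t : ltree X) : Prop :=
  paths_realized H t.

Definition littlestone_dim_eq {X : Type} (H : (X -> sign) -> Prop) (d : nat) : Prop :=
  (exists t, complete_of_depth t d /\ shatters H t) /\
  (forall t m, complete_of_depth t m -> shatters H t -> (m <= d)%nat).

(* value of x |-> h(x) c(x), where c = 1 - 2 I(. \in D) *)
Definition biased_value {X : Type} (h : X -> sign) (D : X -> Prop) (x : X) (y : sign) : Prop :=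
  (D x /\ y = flip (h x)) \/ (~ D x /\ y = h x).

Definition card_le {X : Type} (D : X -> Prop) (l : nat) : Prop :=
  exists ls : list X, (length ls <= l)%nat /\ forall x, D x -> In x ls.

(* The sequence s satisfies the l-bias assumption w.r.t. H:
   some element of H^l agrees with all labels of s. *)
Definition l_biased {X : Type} (H : (X -> sign) -> Prop) (l : nat)
  (s : list (X * sign)) : Prop :=
  exists h D, H h /\ card_le D l /\
    forall p, In p s -> biased_value h D (fst p) (snd p).

(* A learner maps the history (x_1,y_1),...,(x_{t-1},y_{t-1}) and the current
   instance x_t to (p_{t,-}, p_{t,+}). *)
Definition learner (X : Type) : Type := list (X * sign) -> X -> R * R.

Definition valid_learner {X : Type} (L : learner X) : Prop :=
  forall hist x, 0 <= fst (L hist x) /\ 0 <= snd (L hist x) /\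
                 fst (L hist x) + snd (L hist x) <= 1.

Definition mistake_pen (p : R * R) (y : sign) : R :=
  match y with Neg => snd p | Pos => fst p end.
Definition abstain_pen (p : R * R) : R := 1 - fst p - snd p.

(* cumulative (mistake, abstention) penalties of L on the remaining sequence s,
   given the already-seen history hist (chronological order) *)
Fixpoint penalties_from {X : Type} (L : learner X) (hist : list (X * sign))
  (s : list (X * sign)) : R * R :=
  match s with
  | [] => (0, 0)
  | (x, y) :: rest =>
      let p := L hist x in
      let r := penalties_from L (hist ++ [(x, y)]) rest in
      (mistake_pen p y + fst r, abstain_pen p + snd r)
  end.

Definition cum_mistake {X : Type} (L : learner X) (s : list (X * sign)) : R :=
  fst (penalties_from L [] s).
Definition cum_abstain {X : Type} (L : learner X) (s : list (X * sign)) : R :=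
  snd (penalties_from L [] s).

(* An adversary strategy: a horizon n; at each round it chooses x_t from the
   full history (instances, learner's outputs, labels), and then chooses y_t
   after seeing the learner's output (p_{t,-}, p_{t,+}). *)
Record adversary (X : Type) : Type := {
  adv_rounds : nat;
  adv_x : list (X * (R * R) * sign) -> X;
  adv_y : list (X * (R * R) * sign) -> X -> R * R -> sign
}.
Arguments adv_rounds {X} _.
Arguments adv_x {X} _ _.
Arguments adv_y {X} _ _ _ _.

Definition forget {X : Type} (h : list (X * (R * R) * sign)) : list (X * sign) :=
  map (fun e => (fst (fst e), snd e)) h.

Fixpoint play_from {X : Type} (A : adversary X) (L : learner X) (m : nat)
  (hist : list (X * (R * R) * sign)) : list (X * (R * R) * sign) :=
  match m with
  | O => hist
  | S m' =>
      let x := adv_x A hist in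
      let p := L (forget hist) x in
      let y := adv_y A hist x p in
      play_from A L m' (hist ++ [(x, p, y)])
  end.

Definition presented {X : Type} (A : adversary X) (L : learner X) : list (X * sign) :=
  forget (play_from A L (adv_rounds A) []).

Definition guarantees_mistakes {X : Type} (H : (X -> sign) -> Prop) (l k : nat)
  (L : learner X) : Prop :=
  forall s, l_biased H l s -> cum_mistake L s <= INR k.

(* The class of labellings with at most d negative points has Littlestone
   dimension d: a chain of d fresh points is shattered, while along any path of
   a shattered tree every left turn forces one more negative point.

   The adversary presents fresh points 0, 1, 2, ... and answers -1 exactly when
   the learner puts weight at least 1 - eps on +1, until it has answered -1
   k + 1 times.  Every -1 costs at least 1 - eps in mistakes and every other
   answer costs more than eps in mistakes plus abstentions.  With
   eps = 1/(k+2), k + 1 negatives would cost more than k mistakes, so a learner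
   with mistake bound k never sees them, and then every round costs at least
   eps; as k + 1 <= l + d negatives on distinct points are always
   l-biased, the abstentions grow without bound with the horizon. *)

From Stdlib Require Import Reals List Lia Lra.
Import ListNotations.
Open Scope R_scope.

Definition neg_bounded {X : Type} (d : nat) (h : X -> sign) : Prop :=
  card_le (fun x => h x = Neg) d.

Lemma card_le_mono {X : Type} (D E : X -> Prop) (j : nat) :
  (forall x, D x -> E x) -> card_le E j -> card_le D j.
Proof. intros DE [ls [Hlen Hcov]]; exists ls; auto. Qed.

Lemma paths_realized_mono {X : Type} (t : ltree X) :
  forall P Q : (X -> sign) -> Prop,
  (forall h, P h -> Q h) -> paths_realized P t -> paths_realized Q t.
Proof.
  induction t as [|x l IHl r IHr]; simpl; intros P Q PQ HP.
  - destruct HP as [h Hh]; eauto.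
  - destruct HP as [Hl Hr]; split.
    + refine (IHl _ _ _ Hl); simpl; intros h [Ph Hx]; auto.
    + refine (IHr _ _ _ Hr); simpl; intros h [Ph Hx]; auto.
Qed.

Lemma paths_realized_inhabited {X : Type} (t : ltree X) :
  forall P : (X -> sign) -> Prop, paths_realized P t -> exists h, P h.
Proof.
  induction t as [|x l IHl r _]; simpl; intros P HP.
  - exact HP.
  - destruct (IHl _ (proj1 HP)) as [h [Ph _]]; eauto.
Qed.

Section UpperBound.

Variable X : Type.
Hypothesis eq_dec : forall x y : X, {x = y} + {x <> y}.

Lemma card_le_remove (D : X -> Prop) (j : nat) (x : X) :
  card_le D j -> D x -> (1 <= j)%nat /\ card_le (fun y => D y /\ y <> x) (j - 1).
Proof.
  intros [ls [Hlen Hcov]] Dx.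
  pose proof (remove_length_lt eq_dec ls x (Hcov x Dx)).
  split; [lia|].
  exists (remove eq_dec x ls); split; [lia|].
  intros y [Dy Hyx]; apply in_in_remove; auto.
Qed.

(* The points of [S] are the ones already forced negative on the way down. *)
Lemma shattered_depth_le (t : ltree X) :
  forall (m j : nat) (S : list X) (P : (X -> sign) -> Prop),
  complete_of_depth t m -> paths_realized P t ->
  (forall h, P h -> (forall x, In x S -> h x = Neg) /\
                    card_le (fun x => h x = Neg /\ ~ In x S) j) ->
  (m <= j)%nat.
Proof.
  induction t as [|x l IHl r _]; intros m j S P Hc Hp HP.
  - destruct m; [lia|contradiction].
  - destruct m as [|m]; [lia|].
    destruct Hc as [Hcl _], Hp as [Hpl Hpr].
    destruct (paths_realized_inhabited _ _ Hpr) as [hr [Phr Hrx]].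
    assert (HxS : ~ In x S).
    { intros Hin; rewrite (proj1 (HP hr Phr) x Hin) in Hrx; discriminate. }
    destruct (paths_realized_inhabited _ _ Hpl) as [hl [Phl Hlx]].
    destruct (card_le_remove _ _ x (proj2 (HP hl Phl)) (conj Hlx HxS)) as [Hj _].
    enough (m <= j - 1)%nat by lia.
    apply (IHl m (j - 1)%nat (x :: S) _ Hcl Hpl).
    intros h [Ph Hhx]; destruct (HP h Ph) as [HS Hcard]; split.
    + intros y [<-|Hy]; auto.
    + refine (card_le_mono _ _ _ _ (proj2 (card_le_remove _ _ x Hcard (conj Hhx HxS)))).
      intros y [Hy HyS]; simpl in HyS; intuition.
Qed.

Lemma neg_bounded_shattered_depth_le (d m : nat) (t : ltree X) :
  complete_of_depth t m -> shatters (neg_bounded d) t -> (m <= d)%nat.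
Proof.
  intros Hc Hs; apply (shattered_depth_le t m d [] _ Hc Hs).
  intros h Hh; split; [intros x []|].
  refine (card_le_mono _ _ _ _ Hh); tauto.
Qed.

End UpperBound.

Fixpoint chain_tree (i n : nat) : ltree nat :=
  match n with
  | O => Leaf
  | S n' => Node i (chain_tree (S i) n') (chain_tree (S i) n')
  end.

Lemma chain_tree_complete (n i : nat) : complete_of_depth (chain_tree i n) n.
Proof. revert i; induction n; simpl; auto. Qed.

Lemma chain_tree_realized (d n : nat) : forall (i : nat) (g : nat -> sign),
  (i + n <= d)%nat ->
  paths_realized (fun h => neg_bounded d h /\ forall x, (x < i)%nat -> h x = g x)
                 (chain_tree i n).
Proof.
  induction n as [|n IH]; intros i g Hle; simpl.
  - exists (fun x => if Nat.ltb x i then g x else Pos); split.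
    + exists (seq 0 d); rewrite length_seq; split; [lia|].
      intros x Hx; destruct (Nat.ltb_spec x i); [apply in_seq; lia|discriminate].
    + intros x Hx; destruct (Nat.ltb_spec x i); [reflexivity|lia].
  - assert (Hext : forall s, paths_realized
                     (fun h => (neg_bounded d h /\ forall x, (x < i)%nat -> h x = g x) /\ h i = s)
                     (chain_tree (S i) n)).
    { intros s.
      eapply paths_realized_mono;
        [|apply (IH (S i) (fun x => if Nat.eqb x i then s else g x)); lia].
      intros h [Hh Hx]; rewrite (Hx i), Nat.eqb_refl by lia.
      repeat split; auto.
      intros x Hxi; rewrite Hx by lia; destruct (Nat.eqb_spec x i); [lia|reflexivity]. }
    split; apply Hext.
Qed.

Lemma littlestone_dim_neg_bounded (d : nat) : littlestone_dim_eq (@neg_bounded nat d) d.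
Proof.
  split.
  - exists (chain_tree 0 d); split; [apply chain_tree_complete|].
    eapply paths_realized_mono; [|apply (chain_tree_realized d d 0 (fun _ => Pos)); lia].
    intros h [Hh _]; exact Hh.
  - intros t m; apply neg_bounded_shattered_depth_le, Nat.eq_dec.
Qed.

Definition is_neg (y : sign) : bool := match y with Neg => true | Pos => false end.

Definition neg_instances {X : Type} (s : list (X * sign)) : list X :=
  map fst (filter (fun e => is_neg (snd e)) s).

Definition count_neg {X : Type} (s : list (X * sign)) : nat := length (neg_instances s).

Lemma count_neg_snoc {X : Type} (s : list (X * sign)) (x : X) (y : sign) :
  count_neg (s ++ [(x, y)]) = (count_neg s + if is_neg y then 1 else 0)%nat.
Proof.
  unfold count_neg, neg_instances.
  rewrite filter_app, map_app, length_app; destruct y; reflexivity.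
Qed.

Section Bias.

Variable X : Type.
Hypothesis eq_dec : forall x y : X, {x = y} + {x <> y}.

Lemma NoDup_fst_In_eq (s : list (X * sign)) : NoDup (map fst s) ->
  forall x y1 y2, In (x, y1) s -> In (x, y2) s -> y1 = y2.
Proof.
  induction s as [|[a b] s IH]; simpl; intros Hnd x y1 y2 H1 H2; [contradiction|].
  inversion Hnd as [|? ? Hna Hnd']; subst.
  assert (Hnot : forall y, In (a, y) s -> False)
    by (intros y Hy; apply Hna, (in_map fst _ _ Hy)).
  destruct H1 as [E1|H1], H2 as [E2|H2].
  - congruence.
  - injection E1 as -> ->; exfalso; eauto.
  - injection E2 as -> ->; exfalso; eauto.
  - eauto.
Qed.

(* The first [d] negative points are negatives of the hypothesis; the others
   form the flipped set. *)
Lemma l_biased_few_negatives (d l : nat) (s : list (X * sign)) :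
  NoDup (map fst s) -> (count_neg s <= l + d)%nat -> l_biased (neg_bounded d) l s.
Proof.
  intros Hnd Hcount.
  set (N := neg_instances s).
  set (F := firstn d N).
  assert (HN : forall x, In x N <-> In (x, Neg) s).
  { intros x; unfold N, neg_instances; rewrite in_map_iff; split.
    - intros [[x' y] [<- Hin]]; apply filter_In in Hin as [Hin Hy].
      destruct y; [exact Hin|discriminate].
    - intros Hin; exists (x, Neg); split; [reflexivity|apply filter_In; auto]. }
  assert (HF : forall x, In x F -> In x N).
  { intros x Hx; unfold F in Hx; rewrite <- (firstn_skipn d N); apply in_or_app; auto. }
  exists (fun x => if in_dec eq_dec x F then Neg else Pos).
  exists (fun x => In x N /\ ~ In x F).
  split; [|split].
  - exists F; split; [apply firstn_le_length|].
    intros x; destruct (in_dec eq_dec x F); [auto|discriminate].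
  - change (length N <= l + d)%nat in Hcount.
    exists (skipn d N); split; [rewrite length_skipn; lia|].
    intros x [Hx HxF]; rewrite <- (firstn_skipn d N) in Hx.
    apply in_app_or in Hx as [Hx|Hx]; [contradiction|exact Hx].
  - intros [x y] Hin; unfold biased_value; simpl.
    destruct (in_dec eq_dec x F) as [HxF|HxF].
    + right; split; [tauto|].
      destruct y; [reflexivity|].
      pose proof (NoDup_fst_In_eq s Hnd x _ _ Hin (proj1 (HN x) (HF x HxF))); discriminate.
    + destruct y.
      * left; split; [split; [apply HN; exact Hin|exact HxF]|reflexivity].
      * right; split; [|reflexivity].
        intros [HxN _]; pose proof (NoDup_fst_In_eq s Hnd x _ _ Hin (proj1 (HN x) HxN)).
        discriminate.
Qed.

End Bias.

Section Game.

Variable X : Type.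
Variable L : learner X.

Lemma penalties_from_snoc (x : X) (y : sign) : forall s hist,
  penalties_from L hist (s ++ [(x, y)]) =
  (fst (penalties_from L hist s) + mistake_pen (L (hist ++ s) x) y,
   snd (penalties_from L hist s) + abstain_pen (L (hist ++ s) x)).
Proof.
  induction s as [|[x0 y0] s IH]; intros hist; simpl.
  - rewrite app_nil_r; f_equal; ring.
  - rewrite IH, <- app_assoc; simpl; f_equal; ring.
Qed.

Lemma cum_mistake_snoc (s : list (X * sign)) (x : X) (y : sign) :
  cum_mistake L (s ++ [(x, y)]) = cum_mistake L s + mistake_pen (L s x) y.
Proof. unfold cum_mistake; rewrite penalties_from_snoc; reflexivity. Qed.

Lemma cum_abstain_snoc (s : list (X * sign)) (x : X) (y : sign) :
  cum_abstain L (s ++ [(x, y)]) = cum_abstain L s + abstain_pen (L s x).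
Proof. unfold cum_abstain; rewrite penalties_from_snoc; reflexivity. Qed.

Lemma forget_snoc (h : list (X * (R * R) * sign)) (x : X) (p : R * R) (y : sign) :
  forget (h ++ [(x, p, y)]) = forget h ++ [(x, y)].
Proof. apply map_app. Qed.

Variable A : adversary X.

Lemma length_play_from (m : nat) : forall h,
  length (play_from A L m h) = (m + length h)%nat.
Proof.
  induction m as [|m IH]; intros h; simpl; [reflexivity|].
  rewrite IH, length_app; simpl; lia.
Qed.

Lemma play_from_invariant (Inv : list (X * (R * R) * sign) -> Prop) :
  (forall h, Inv h ->
     let x := adv_x A h in
     let p := L (forget h) x in
     Inv (h ++ [(x, p, adv_y A h x p)])) ->
  forall m h, Inv h -> Inv (play_from A L m h).
Proof. intros Hstep m; induction m as [|m IH]; intros h Hh; simpl; auto. Qed.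

End Game.

Definition threshold_label (k : nat) (eps : R) (s : list (nat * sign)) (p : R * R) : sign :=
  if Nat.ltb (count_neg s) (S k) then
    if Rle_dec (1 - eps) (snd p) then Neg else Pos
  else Pos.

Definition threshold_adversary (k n : nat) (eps : R) : adversary nat := {|
  adv_rounds := n;
  adv_x := fun hist => length hist;
  adv_y := fun hist _ p => threshold_label k eps (forget hist) p |}.

Section Threshold.

Variables (k n : nat) (eps : R) (L : learner nat).

Let A := threshold_adversary k n eps.

Lemma threshold_instances : map fst (presented A L) = seq 0 n.
Proof.
  unfold presented; change (adv_rounds A) with n.
  replace n with (length (play_from A L n [])) at 2
    by (rewrite length_play_from; apply Nat.add_0_r).
  apply (play_from_invariant _ L A (fun h => map fst (forget h) = seq 0 (length h)));
    [|reflexivity].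
  intros h Hh; simpl.
  rewrite forget_snoc, map_app, Hh, length_app, Nat.add_1_r, seq_S; reflexivity.
Qed.

Lemma threshold_count_neg_le : (count_neg (presented A L) <= S k)%nat.
Proof.
  unfold presented; change (adv_rounds A) with n.
  apply (play_from_invariant _ L A (fun h => count_neg (forget h) <= S k)%nat);
    [|apply Nat.le_0_l].
  intros h Hh; simpl; rewrite forget_snoc, count_neg_snoc.
  unfold threshold_label.
  destruct (Nat.ltb_spec (count_neg (forget h)) (S k)); [|simpl; lia].
  destruct (Rle_dec _ _); simpl; lia.
Qed.

Lemma threshold_penalties : valid_learner L -> 0 < eps < 1 ->
  let s := presented A L in
  INR (count_neg s) * (1 - eps) <= cum_mistake L s /\
  ((count_neg s < S k)%nat ->
   INR n * eps <= cum_mistake L s + cum_abstain L s + INR (count_neg s) * eps).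
Proof.
  intros HL Heps.
  pose (Inv h := let s := forget h in
    INR (count_neg s) * (1 - eps) <= cum_mistake L s /\
    ((count_neg s < S k)%nat ->
     INR (length h) * eps <= cum_mistake L s + cum_abstain L s + INR (count_neg s) * eps)).
  enough (Hinv : Inv (play_from A L n [])).
  { unfold Inv in Hinv; rewrite length_play_from, Nat.add_0_r in Hinv; exact Hinv. }
  apply play_from_invariant;
    [|unfold Inv, cum_mistake, cum_abstain; simpl; split; intros; lra].
  intros h [Hmis Hrounds]; unfold Inv; simpl.
  rewrite forget_snoc, count_neg_snoc, cum_mistake_snoc, cum_abstain_snoc,
          length_app, plus_INR, plus_INR.
  destruct (HL (forget h) (length h)) as [Hneg [Hpos Hsum]].
  set (p := L (forget h) (length h)) in *.
  unfold threshold_label, abstain_pen.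
  destruct (Nat.ltb_spec (count_neg (forget h)) (S k)) as [Hlt|Hge].
  - destruct (Rle_dec (1 - eps) (snd p)) as [Hp|Hp]; simpl.
    + split; [lra|]; intros Hc; specialize (Hrounds ltac:(lia)); lra.
    + split; [lra|]; intros _; specialize (Hrounds Hlt); lra.
  - simpl; split; [lra|lia].
Qed.

End Threshold.

Theorem mainTheorem4 (d : nat) :
  exists (X : Type) (H : (X -> sign) -> Prop),
    littlestone_dim_eq H d /\
    forall k l : nat, (k < l + d)%nat ->
      forall a : R, 0 <= a ->
        exists A : adversary X,
          (forall L : learner X, valid_learner L -> l_biased H l (presented A L)) /\
          (forall L : learner X, valid_learner L ->
              guarantees_mistakes H l k L ->
              a <= cum_abstain L (presented A L)).
Proof.
  exists nat, (neg_bounded d); split; [apply littlestone_dim_neg_bounded|].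
  intros k l Hk a _.
  pose proof (pos_INR k) as Hk0.
  set (eps := / (INR k + 2)).
  assert (Heps : eps * (INR k + 2) = 1) by (unfold eps; field; lra).
  assert (Heps01 : 0 < eps < 1) by (split; [unfold eps; apply Rinv_0_lt_compat|]; nra).
  destruct (INR_unbounded (a + INR k + 1)) as [N HN].
  set (n := ((k + 2) * N)%nat).
  exists (threshold_adversary k n eps).
  assert (Hbiased : forall L,
            l_biased (neg_bounded d) l (presented (threshold_adversary k n eps) L)).
  { intros L; apply l_biased_few_negatives; [exact Nat.eq_dec| |].
    - rewrite threshold_instances; apply seq_NoDup.
    - pose proof (threshold_count_neg_le k n eps L); lia. }
  split; [intros L _; apply Hbiased|].
  intros L HL Hguar; specialize (Hguar _ (Hbiased L)).
  destruct (threshold_penalties k n eps L HL Heps01) as [Hmis Hrounds].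
  pose proof (threshold_count_neg_le k n eps L) as Hcount.
  set (c := count_neg _) in *.
  destruct (Nat.lt_ge_cases c (S k)) as [Hlt|Hge].
  - specialize (Hrounds Hlt).
    assert (Hn : INR n * eps = INR N).
    { unfold n; rewrite mult_INR, plus_INR; change (INR 2) with 2.
      transitivity (eps * (INR k + 2) * INR N); [ring|rewrite Heps; ring]. }
    assert (Hc : INR c * eps <= 1).
    { apply le_INR in Hcount; rewrite S_INR in Hcount.
      pose proof (Rmult_le_compat_r eps _ _ (Rlt_le _ _ (proj1 Heps01)) Hcount); lra. }
    lra.
  - replace c with (S k) in Hmis by lia.
    rewrite S_INR in Hmis; nra.
Qed.
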